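(* Let $\alpha,\beta,\gamma,\delta>0$ and $u_0,v_0,w_0>0$. Then the ODE system $u'=\delta uw$, $v'=\alpha vw$, $w'=-\beta uw-\gamma vw$ ($t>0$) with $u(0)=u_0$, $v(0)=v_0$, $w(0)=w_0$ has a unique global positive solution $(u,v,w)$, and there exist nonnegative numbers $u_\infty,v_\infty$ such that $u(t)\to u_\infty$, $v(t)\to v_\infty$ and $w(t)\to0$ as $t\to\infty$. Moreover, if $u_0=v_0$, then $\operatorname{sgn}(u_\infty-v_\infty)=\operatorname{sgn}(\delta-\alpha)$. *)

From Stdlib Require Import Reals Lra.
Open Scope R_scope.

Definition sgn (x : R) : R :=
  match Rcase_abs x with
  | left _ => -1
  | right _ => if Req_EM_T x 0 then 0 else 1
  end.

Definition right_cont_at0 (f : R -> R) (a : R) : Prop :=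
  forall eps, 0 < eps -> exists d, 0 < d /\
    forall t, 0 <= t < d -> Rabs (f t - a) < eps.

Definition tends_at_infty (f : R -> R) (l : R) : Prop :=
  forall eps, 0 < eps -> exists T, forall t, T <= t -> Rabs (f t - l) < eps.

Definition is_global_solution (alpha beta gamma delta u0 v0 w0 : R)
  (u v w : R -> R) : Prop :=
  u 0 = u0 /\ v 0 = v0 /\ w 0 = w0 /\
  right_cont_at0 u u0 /\ right_cont_at0 v v0 /\ right_cont_at0 w w0 /\
  (forall t, 0 < t ->
     derivable_pt_lim u t (delta * u t * w t) /\
     derivable_pt_lim v t (alpha * v t * w t) /\
     derivable_pt_lim w t (- beta * u t * w t - gamma * v t * w t)).

(* Along a solution, [w + beta u / delta + gamma v / alpha] is conserved, while
   [(ln u)' = delta w] and [(ln v)' = alpha w].  Hence, with the cumulative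
   [s = int_0^t w], one has [u = u0 e^(delta s)], [v = v0 e^(alpha s)] and
   [w = profile s], so [s] solves the autonomous scalar equation [s' = profile s],
   [s(0) = 0].  The profile decreases from [w0 > 0] to a root [l > 0], near which it
   vanishes at most linearly; so the flow, the inverse of
   [x |-> int_0^x dy / profile y], is defined for all times and increases to [l].
   Thus [u -> u0 e^(delta l)], [v -> v0 e^(alpha l)] and [w -> 0], and for
   [u0 = v0] the sign of [u_inf - v_inf] is that of [delta - alpha].  Uniqueness is
   Gronwall's inequality for the squared distance between two solutions. *)

From Stdlib Require Import Reals Lra ClassicalEpsilon Ranalysis5.
From Coquelicot Require Import Coquelicot.
Open Scope R_scope.

Lemma continuity_pt_eps f x : continuity_pt f x -> forall eps, 0 < eps ->
  exists d, 0 < d /\ forall y, Rabs (y - x) < d -> Rabs (f y - f x) < eps.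
Proof.
  intros Hf eps Heps.
  destruct (proj1 (continuity_pt_locally f x) Hf (mkposreal _ Heps)) as [d Hd].
  exists d. split; [apply cond_pos | intros y Hy; exact (Hd y Hy)].
Qed.

Lemma right_cont_at0_of_continuity f : continuity_pt f 0 -> right_cont_at0 f (f 0).
Proof.
  intros Hf eps Heps. destruct (continuity_pt_eps f 0 Hf eps Heps) as [d [Hd Hfd]].
  exists d. split; [exact Hd|]. intros t Ht. apply Hfd. rewrite Rminus_0_r, Rabs_right; lra.
Qed.

Lemma tends_at_infty_comp (s g : R -> R) l :
  tends_at_infty s l -> continuity_pt g l -> tends_at_infty (fun t => g (s t)) (g l).
Proof.
  intros Hs Hg eps Heps. destruct (continuity_pt_eps g l Hg eps Heps) as [d [Hd Hgd]].
  destruct (Hs d Hd) as [T HT]. exists T. intros t Ht. apply Hgd, HT, Ht.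
Qed.

Lemma right_cont_at0_plus f g a b :
  right_cont_at0 f a -> right_cont_at0 g b -> right_cont_at0 (fun t => f t + g t) (a + b).
Proof.
  intros Hf Hg eps Heps.
  destruct (Hf (eps / 2) ltac:(lra)) as [d1 [Hd1 H1]].
  destruct (Hg (eps / 2) ltac:(lra)) as [d2 [Hd2 H2]].
  exists (Rmin d1 d2). split; [apply Rmin_glb_lt; lra|]. intros t [Ht0 Ht].
  assert (Hf1 := H1 t (conj Ht0 (Rlt_le_trans _ _ _ Ht (Rmin_l d1 d2)))).
  assert (Hg2 := H2 t (conj Ht0 (Rlt_le_trans _ _ _ Ht (Rmin_r d1 d2)))).
  apply Rabs_def2 in Hf1. apply Rabs_def2 in Hg2. apply Rabs_def1; lra.
Qed.

Lemma right_cont_at0_sqr_dist f g a :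
  right_cont_at0 f a -> right_cont_at0 g a ->
  right_cont_at0 (fun t => (f t - g t) * (f t - g t)) 0.
Proof.
  intros Hf Hg eps Heps.
  set (eta := Rmin 1 (eps / 4)).
  assert (Heta : 0 < eta) by (apply Rmin_glb_lt; lra).
  assert (Heta1 : eta <= 1) by apply Rmin_l.
  assert (Heta2 : eta <= eps / 4) by apply Rmin_r.
  destruct (Hf eta Heta) as [d1 [Hd1 H1]].
  destruct (Hg eta Heta) as [d2 [Hd2 H2]].
  exists (Rmin d1 d2). split; [apply Rmin_glb_lt; lra|]. intros t [Ht0 Ht].
  assert (Hf1 := H1 t (conj Ht0 (Rlt_le_trans _ _ _ Ht (Rmin_l d1 d2)))).
  assert (Hg2 := H2 t (conj Ht0 (Rlt_le_trans _ _ _ Ht (Rmin_r d1 d2)))).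
  apply Rabs_def2 in Hf1. apply Rabs_def2 in Hg2.
  assert (Hsq : (f t - g t) * (f t - g t) < 4 * (eta * eta)).
  { assert (0 < (2 * eta - (f t - g t)) * (2 * eta + (f t - g t))) by (apply Rmult_lt_0_compat; lra).
    nra. }
  rewrite Rminus_0_r, Rabs_right by (apply Rle_ge, Rle_0_sqr). nra.
Qed.

Lemma right_cont_at0_bounded f a T : 0 < T -> right_cont_at0 f a ->
  (forall t, 0 < t <= T -> continuity_pt f t) ->
  exists N, 0 <= N /\ forall t, 0 < t <= T -> Rabs (f t) <= N.
Proof.
  intros HT Hf Hc.
  destruct (Hf 1 Rlt_0_1) as [d [Hd Hfd]].
  set (e := Rmin (d / 2) T).
  assert (He : 0 < e) by (apply Rmin_glb_lt; lra).
  assert (HeT : e <= T) by apply Rmin_r.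
  assert (Hed : e <= d / 2) by apply Rmin_l.
  destruct (continuity_ab_maj f e T HeT) as [xmax [Hmax _]]. { intros; apply Hc; lra. }
  destruct (continuity_ab_min f e T HeT) as [xmin [Hmin _]]. { intros; apply Hc; lra. }
  exists (Rabs a + 1 + Rabs (f xmax) + Rabs (f xmin)).
  assert (H1 := Rabs_pos a). assert (H2 := Rabs_pos (f xmax)). assert (H3 := Rabs_pos (f xmin)).
  split; [lra|]. intros t Ht.
  destruct (Rlt_le_dec t d) as [Htd | Htd].
  - assert (Hnear := Hfd t ltac:(lra)).
    assert (Rabs (f t) <= Rabs (f t - a) + Rabs a).
    { replace (f t) with ((f t - a) + a) at 1 by ring. apply Rabs_triang. }
    lra.
  - assert (A1 := Hmax t ltac:(lra)). assert (A2 := Hmin t ltac:(lra)).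
    assert (A3 := RRle_abs (f xmax)). assert (A4 := Rabs_maj2 (f xmin)).
    apply Rabs_le. lra.
Qed.

Lemma gronwall_vanishing_at0 (E dE : R -> R) K T : 0 <= K -> 0 < T ->
  right_cont_at0 E 0 ->
  (forall t, 0 < t <= T -> derivable_pt_lim E t (dE t) /\ dE t <= K * E t) ->
  E T <= 0.
Proof.
  intros HK HT HE0 HdE.
  set (h := fun t => E t * exp (- K * t)).
  assert (HhT : forall eps, 0 < eps -> h T < eps).
  { intros eps Heps. destruct (HE0 eps Heps) as [d [Hd Hsmall]].
    set (e := Rmin (d / 2) (T / 2)).
    assert (He : 0 < e) by (apply Rmin_glb_lt; lra).
    assert (HeT : e < T) by (apply (Rle_lt_trans _ (T / 2)); [apply Rmin_r | lra]).
    assert (Hed : e < d) by (apply (Rle_lt_trans _ (d / 2)); [apply Rmin_l | lra]).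
    destruct (MVT_cor2 h (fun t => (dE t - K * E t) * exp (- K * t)) e T HeT)
      as [c [Hmvt Hc]].
    { intros c Hc. destruct (HdE c ltac:(lra)) as [HEc _].
      replace ((dE c - K * E c) * exp (- K * c))
        with (dE c * exp (- K * c) + E c * (- K * exp (- K * c))) by ring.
      apply (derivable_pt_lim_mult E (fun t => exp (- K * t))); [exact HEc|].
      apply is_derive_Reals. auto_derive; [exact I | ring]. }
    assert (Hdecay : (dE c - K * E c) * exp (- K * c) <= 0).
    { destruct (HdE c ltac:(lra)) as [_ Hc']. assert (H := exp_pos (- K * c)). nra. }
    assert (Hhe : h e < eps).
    { assert (Hsm := Hsmall e ltac:(lra)). rewrite Rminus_0_r in Hsm.
      apply Rabs_def2 in Hsm.
      assert (Hexp1 : exp (- K * e) <= 1).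
      { rewrite <- exp_0. destruct (Rle_lt_or_eq_dec (- K * e) 0) as [Hlt | ->]; [nra | |].
        - left. apply exp_increasing, Hlt.
        - right. reflexivity. }
      assert (H := exp_pos (- K * e)). unfold h. nra. }
    assert (Hdrop : h T - h e <= 0).
    { rewrite Hmvt. apply Rmult_le_0_r; lra. }
    lra. }
  assert (HhT0 : E T * exp (- K * T) <= 0).
  { apply Rnot_lt_le. intros Hpos. specialize (HhT _ Hpos). unfold h in HhT. lra. }
  assert (H := exp_pos (- K * T)). nra.
Qed.

Lemma cross_term_le c W N a b S :
  Rabs W <= N -> a * a + b * b <= 2 * S -> c * (W * (a * b)) <= Rabs c * (N * S).
Proof.
  intros HW Hab.
  assert (Hprod : 2 * Rabs (a * b) <= a * a + b * b).
  { rewrite Rabs_mult. assert (H := Rle_0_sqr (Rabs a - Rabs b)). unfold Rsqr in H.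
    assert (Ha : Rabs a * Rabs a = a * a) by (change (Rsqr (Rabs a) = Rsqr a); rewrite <- Rsqr_abs; reflexivity).
    assert (Hb : Rabs b * Rabs b = b * b) by (change (Rsqr (Rabs b) = Rsqr b); rewrite <- Rsqr_abs; reflexivity).
    nra. }
  apply (Rle_trans _ (Rabs (c * (W * (a * b))))); [apply RRle_abs|].
  rewrite !Rabs_mult, <- Rabs_mult.
  apply Rmult_le_compat_l; [apply Rabs_pos|].
  apply Rmult_le_compat; [apply Rabs_pos | apply Rabs_pos | exact HW | lra].
Qed.

Lemma energy_derivative_le al be ga de N u v r x y z :
  Rabs u <= N -> Rabs v <= N -> Rabs r <= N ->
  2 * x * (de * (u * z + r * x)) + 2 * y * (al * (v * z + r * y))
  + 2 * z * (- be * (u * z + r * x) - ga * (v * z + r * y))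
  <= 4 * (Rabs al + Rabs be + Rabs ga + Rabs de) * N * (x * x + y * y + z * z).
Proof.
  intros Hu Hv Hr.
  set (S := x * x + y * y + z * z).
  assert (Sx := Rle_0_sqr x). assert (Sy := Rle_0_sqr y). assert (Sz := Rle_0_sqr z).
  unfold Rsqr in Sx, Sy, Sz.
  assert (T1 := cross_term_le (2 * de) u N x z S Hu ltac:(unfold S; lra)).
  assert (T2 := cross_term_le (2 * de) r N x x S Hr ltac:(unfold S; lra)).
  assert (T3 := cross_term_le (2 * al) v N y z S Hv ltac:(unfold S; lra)).
  assert (T4 := cross_term_le (2 * al) r N y y S Hr ltac:(unfold S; lra)).
  assert (T5 := cross_term_le (-2 * be) u N z z S Hu ltac:(unfold S; lra)).
  assert (T6 := cross_term_le (-2 * be) r N x z S Hr ltac:(unfold S; lra)).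
  assert (T7 := cross_term_le (-2 * ga) v N z z S Hv ltac:(unfold S; lra)).
  assert (T8 := cross_term_le (-2 * ga) r N y z S Hr ltac:(unfold S; lra)).
  assert (Habs2 : forall c, Rabs (2 * c) = 2 * Rabs c /\ Rabs (-2 * c) = 2 * Rabs c).
  { intros c. rewrite !Rabs_mult, (Rabs_right 2), (Rabs_left (-2)) by lra. split; ring. }
  destruct (Habs2 de) as [D1 _]. destruct (Habs2 al) as [A1 _].
  destruct (Habs2 be) as [_ B1]. destruct (Habs2 ga) as [_ G1].
  rewrite D1 in T1, T2. rewrite A1 in T3, T4. rewrite B1 in T5, T6. rewrite G1 in T7, T8.
  lra.
Qed.

Lemma derivable_pt_lim_sqr_dist f g t lf lg :
  derivable_pt_lim f t lf -> derivable_pt_lim g t lg ->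
  derivable_pt_lim (fun y => (f y - g y) * (f y - g y)) t (2 * (f t - g t) * (lf - lg)).
Proof.
  intros Hf Hg. assert (Hd := derivable_pt_lim_minus f g t lf lg Hf Hg).
  replace (2 * (f t - g t) * (lf - lg))
    with ((lf - lg) * (f t - g t) + (f t - g t) * (lf - lg)) by ring.
  exact (derivable_pt_lim_mult _ _ t _ _ Hd Hd).
Qed.

Lemma is_global_solution_bounded al be ga de u0 v0 w0 (u v w : R -> R) T :
  is_global_solution al be ga de u0 v0 w0 u v w -> 0 < T ->
  exists N, 0 <= N /\ forall t, 0 < t <= T ->
    Rabs (u t) <= N /\ Rabs (v t) <= N /\ Rabs (w t) <= N.
Proof.
  intros (_ & _ & _ & Hru & Hrv & Hrw & D) HT.
  assert (Hcont : forall (f df : R -> R), (forall t, 0 < t -> derivable_pt_lim f t (df t)) ->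
            forall t, 0 < t <= T -> continuity_pt f t).
  { intros f df Hf t Ht. apply derivable_continuous_pt. exists (df t). apply Hf. lra. }
  destruct (right_cont_at0_bounded u u0 T HT Hru) as [Nu [HNu Bu]].
  { apply (Hcont u (fun t => de * u t * w t)). intros t Ht; apply D, Ht. }
  destruct (right_cont_at0_bounded v v0 T HT Hrv) as [Nv [HNv Bv]].
  { apply (Hcont v (fun t => al * v t * w t)). intros t Ht; apply D, Ht. }
  destruct (right_cont_at0_bounded w w0 T HT Hrw) as [Nw [HNw Bw]].
  { apply (Hcont w (fun t => - be * u t * w t - ga * v t * w t)). intros t Ht; apply D, Ht. }
  exists (Nu + Nv + Nw). split; [lra|]. intros t Ht.
  specialize (Bu t Ht). specialize (Bv t Ht). specialize (Bw t Ht). lra.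
Qed.

Lemma is_global_solution_unique al be ga de u0 v0 w0 (u v w p q r : R -> R) :
  is_global_solution al be ga de u0 v0 w0 u v w ->
  is_global_solution al be ga de u0 v0 w0 p q r ->
  forall t, 0 <= t -> p t = u t /\ q t = v t /\ r t = w t.
Proof.
  intros Su Sp t [Ht | <-].
  2: { destruct Su as (Hu0 & Hv0 & Hw0 & _). destruct Sp as (Hp0 & Hq0 & Hr0 & _).
       repeat split; congruence. }
  destruct (is_global_solution_bounded _ _ _ _ _ _ _ _ _ _ t Su Ht) as [N1 [HN1 B1]].
  destruct (is_global_solution_bounded _ _ _ _ _ _ _ _ _ _ t Sp Ht) as [N2 [HN2 B2]].
  destruct Su as (_ & _ & _ & Hru & Hrv & Hrw & Du).
  destruct Sp as (_ & _ & _ & Hrp & Hrq & Hrr & Dp).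
  set (N := N1 + N2).
  set (E := fun s => (p s - u s) * (p s - u s) + (q s - v s) * (q s - v s)
                     + (r s - w s) * (r s - w s)).
  assert (HEt : E t <= 0).
  { apply (gronwall_vanishing_at0 E
      (fun s => 2 * (p s - u s) * (de * p s * r s - de * u s * w s)
              + 2 * (q s - v s) * (al * q s * r s - al * v s * w s)
              + 2 * (r s - w s) * ((- be * p s * r s - ga * q s * r s)
                                   - (- be * u s * w s - ga * v s * w s)))
      (4 * (Rabs al + Rabs be + Rabs ga + Rabs de) * N) t).
    - assert (H := Rabs_pos al). assert (H1 := Rabs_pos be).
      assert (H2 := Rabs_pos ga). assert (H3 := Rabs_pos de).
      apply Rmult_le_pos; unfold N; lra.
    - exact Ht.
    - assert (H := right_cont_at0_plus _ _ _ _
                     (right_cont_at0_plus _ _ _ _ (right_cont_at0_sqr_dist p u u0 Hrp Hru)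
                                                 (right_cont_at0_sqr_dist q v v0 Hrq Hrv))
                     (right_cont_at0_sqr_dist r w w0 Hrr Hrw)).
      rewrite !Rplus_0_r in H. exact H.
    - intros s Hs. destruct (Du s ltac:(lra)) as (Dus & Dvs & Dws).
      destruct (Dp s ltac:(lra)) as (Dps & Dqs & Drs). split.
      + apply derivable_pt_lim_plus; [apply derivable_pt_lim_plus|];
          apply derivable_pt_lim_sqr_dist; assumption.
      + assert (H := energy_derivative_le al be ga de N (u s) (v s) (r s)
                       (p s - u s) (q s - v s) (r s - w s)
                       ltac:(specialize (B1 s Hs); unfold N; lra)
                       ltac:(specialize (B1 s Hs); unfold N; lra)
                       ltac:(specialize (B2 s Hs); unfold N; lra)).
        unfold E. lra. }
  unfold E in HEt.
  assert (H1 := Rle_0_sqr (p t - u t)). assert (H2 := Rle_0_sqr (q t - v t)).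
  assert (H3 := Rle_0_sqr (r t - w t)). unfold Rsqr in *.
  repeat split; nra.
Qed.

Section AutonomousFlow.

Variables (F : R -> R) (l L : R).
Hypothesis F_cont : forall x, x < l -> continuity_pt F x.
Hypothesis F_pos : forall x, x < l -> 0 < F x.
Hypothesis F_le_lipschitz : forall x, x < l -> F x <= L * (l - x).
Hypothesis l_pos : 0 < l.

Definition hitting_time x := RInt (fun y => / F y) 0 x.

Lemma inv_F_continuous x : x < l -> continuous (fun y => / F y) x.
Proof.
  intros Hx. apply continuity_pt_filterlim, continuity_pt_inv; [apply F_cont, Hx|].
  apply Rgt_not_eq, F_pos, Hx.
Qed.

Lemma hitting_time_derive x : x < l -> derivable_pt_lim hitting_time x (/ F x).
Proof.
  intros Hx. apply is_derive_Reals, (is_derive_RInt (fun y => / F y) _ 0).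
  - assert (Hr : 0 < l - x) by lra.
    exists (mkposreal _ Hr). intros y Hy. change (Rabs (y - x) < l - x) in Hy.
    apply Rabs_def2 in Hy.
    apply (RInt_correct (V := R_CompleteNormedModule)),
          (ex_RInt_continuous (V := R_CompleteNormedModule)).
    intros z [_ Hz]. apply inv_F_continuous.
    apply (Rle_lt_trans _ _ _ Hz), Rmax_lub_lt; lra.
  - apply inv_F_continuous, Hx.
Qed.

Lemma hitting_time_continuous x : x < l -> continuity_pt hitting_time x.
Proof.
  intros Hx. apply derivable_continuous_pt. exists (/ F x). apply hitting_time_derive, Hx.
Qed.

Lemma hitting_time_0 : hitting_time 0 = 0.
Proof. unfold hitting_time. rewrite RInt_point. reflexivity. Qed.

Lemma hitting_time_lt x y : x < y -> y < l -> hitting_time x < hitting_time y.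
Proof.
  intros Hxy Hy.
  destruct (MVT_cor2 hitting_time (fun z => / F z) x y Hxy) as [c [Hc1 Hc2]].
  - intros c Hc. apply hitting_time_derive. lra.
  - assert (0 < / F c) by (apply Rinv_0_lt_compat, F_pos; lra). nra.
Qed.

Lemma hitting_time_le_inv x y :
  x < l -> hitting_time x <= hitting_time y -> x <= y.
Proof.
  intros Hx Hxy. apply Rnot_lt_le. intros Hyx.
  assert (hitting_time y < hitting_time x) by (apply hitting_time_lt; lra). lra.
Qed.

Lemma lipschitz_constant_pos : 0 < L.
Proof. assert (H0 := F_pos 0 l_pos). assert (H1 := F_le_lipschitz 0 l_pos). nra. Qed.

(* The time to reach x is at least the time taken by the linear flow [s' = L (l - s)]. *)
Lemma hitting_time_ge_log x : 0 <= x < l -> / L * (ln l - ln (l - x)) <= hitting_time x.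
Proof.
  intros [[Hx0 | <-] Hx].
  2: { rewrite hitting_time_0, Rminus_0_r, Rminus_diag, Rmult_0_r. lra. }
  assert (HL := lipschitz_constant_pos).
  set (gap := fun z => hitting_time z - / L * (ln l - ln (l - z))).
  destruct (MVT_cor2 gap (fun z => / F z - / L * / (l - z)) 0 x Hx0) as [c [Hc1 Hc2]].
  - intros c Hc. unfold gap.
    apply derivable_pt_lim_minus; [apply hitting_time_derive; lra|].
    apply is_derive_Reals. auto_derive; [lra | field; lra].
  - assert (HFc := F_pos c ltac:(lra)).
    assert (HFL := F_le_lipschitz c ltac:(lra)).
    assert (Hinv : / (L * (l - c)) <= / F c) by (apply Rinv_le_contravar; assumption).
    rewrite Rinv_mult in Hinv.
    assert (Hgap : gap 0 <= gap x) by nra.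
    unfold gap in Hgap. rewrite hitting_time_0, Rminus_0_r in Hgap. lra.
Qed.

Lemma hitting_time_unbounded t : exists x, 0 <= x < l /\ t < hitting_time x.
Proof.
  assert (HL := lipschitz_constant_pos).
  set (e := exp (- L * (Rabs t + 1))).
  assert (He0 : 0 < e) by apply exp_pos.
  assert (He1 : e < 1).
  { rewrite <- exp_0. apply exp_increasing. assert (H := Rabs_pos t). nra. }
  exists (l - l * e). split; [split; nra|].
  eapply Rlt_le_trans; [| apply hitting_time_ge_log; split; nra].
  replace (l - (l - l * e)) with (l * e) by ring.
  rewrite ln_mult by assumption. unfold e. rewrite ln_exp.
  replace (/ L * (ln l - (ln l + - L * (Rabs t + 1)))) with (Rabs t + 1) by (field; lra).
  assert (H := RRle_abs t). lra.
Qed.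

Lemma hitting_time_onto t : hitting_time (-1) <= t ->
  exists x, -1 <= x < l /\ hitting_time x = t.
Proof.
  intros Ht. destruct (hitting_time_unbounded t) as [X [HX HtX]].
  destruct (f_interv_is_interv hitting_time (-1) X t) as [x [Hx Hxt]]; [lra | lra | |].
  - intros x Hx. apply hitting_time_continuous. lra.
  - exists x. split; [lra | exact Hxt].
Qed.

(* Inverting [hitting_time] on [-1, l) rather than [0, l) puts [t = 0] in the
   interior of the domain of [flow], as needed for its derivative at 0. *)
Definition flow t := epsilon (inhabits 0) (fun x => -1 <= x < l /\ hitting_time x = t).

Lemma flow_spec t : hitting_time (-1) <= t -> -1 <= flow t < l /\ hitting_time (flow t) = t.
Proof. intros Ht. unfold flow. apply epsilon_spec, hitting_time_onto, Ht. Qed.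

Lemma flow_hitting_time x : -1 <= x < l -> flow (hitting_time x) = x.
Proof.
  intros Hx.
  assert (Hm : hitting_time (-1) <= hitting_time x).
  { destruct Hx as [[Hx | <-] Hxl]; [apply Rlt_le, hitting_time_lt | right]; lra. }
  destruct (flow_spec _ Hm) as [Hf1 Hf2].
  apply Rle_antisym; apply hitting_time_le_inv; lra.
Qed.

Lemma flow_le t1 t2 : hitting_time (-1) <= t1 -> t1 <= t2 -> flow t1 <= flow t2.
Proof.
  intros H1 H12. destruct (flow_spec t1 H1) as [Hf1 Ht1].
  destruct (flow_spec t2 ltac:(lra)) as [Hf2 Ht2].
  apply hitting_time_le_inv; lra.
Qed.

Lemma hitting_time_m1_neg : hitting_time (-1) < 0.
Proof. rewrite <- hitting_time_0. apply hitting_time_lt; lra. Qed.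

Lemma flow_0 : flow 0 = 0.
Proof. rewrite <- hitting_time_0 at 1. apply flow_hitting_time. lra. Qed.

Lemma flow_range t : 0 <= t -> 0 <= flow t < l.
Proof.
  intros Ht. assert (Hm := hitting_time_m1_neg).
  split; [rewrite <- flow_0; apply flow_le; lra | apply flow_spec; lra].
Qed.

Lemma flow_continuous t : 0 <= t -> continuity_pt flow t.
Proof.
  intros Ht. assert (Hm := hitting_time_m1_neg).
  destruct (flow_spec (t + 1) ltac:(lra)) as [Hub Hfub].
  assert (Hlt : -1 < flow (t + 1)).
  { destruct Hub as [[Hlt | Heq] _]; [exact Hlt|].
    rewrite <- Heq in Hfub. lra. }
  apply (continuity_pt_recip_interv hitting_time flow (-1) (flow (t + 1)) Hlt).
  - intros x y Hx Hxy Hy. apply hitting_time_lt; lra.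
  - intros x Hx _. apply flow_spec, Hx.
  - intros x Hx1 Hx2. rewrite Hfub in Hx2.
    split; [apply flow_spec, Hx1 | apply flow_le; assumption].
  - intros x Hx. apply hitting_time_continuous. lra.
  - rewrite Hfub. lra.
Qed.

Lemma flow_derive t : 0 <= t -> derivable_pt_lim flow t (F (flow t)).
Proof.
  intros Ht. assert (Hm := hitting_time_m1_neg).
  set (lb := hitting_time (-1)).
  assert (Hrange : forall x, lb <= x -> -1 <= flow x < l) by (intros x Hx; apply flow_spec, Hx).
  assert (Prf : forall a, flow lb <= a <= flow (t + 1) -> derivable_pt hitting_time a).
  { intros a Ha. exists (/ F a). apply hitting_time_derive.
    destruct (Hrange (t + 1) ltac:(unfold lb; lra)). lra. }
  assert (Hmono : flow lb <= flow t <= flow (t + 1)) by (split; apply flow_le; unfold lb; lra).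
  assert (HFt := F_pos (flow t) ltac:(apply flow_range, Ht)).
  assert (Hder : derive_pt hitting_time (flow t) (Prf (flow t) Hmono) = / F (flow t)).
  { apply derive_pt_eq_0, hitting_time_derive, flow_range, Ht. }
  replace (F (flow t)) with (1 / derive_pt hitting_time (flow t) (Prf (flow t) Hmono))
    by (rewrite Hder; field; lra).
  apply (derivable_pt_lim_recip_interv hitting_time flow lb (t + 1) t Prf).
  - apply flow_continuous, Ht.
  - unfold lb; lra.
  - unfold lb; lra.
  - intros x Hx. unfold comp, id. apply flow_spec. unfold lb in Hx. lra.
  - rewrite Hder. apply Rgt_not_eq, Rinv_0_lt_compat, HFt.
Qed.

Lemma flow_tends : tends_at_infty flow l.
Proof.
  intros eps Heps.
  set (y := Rmax (-1) (l - eps / 2)).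
  assert (Hy1 : -1 <= y) by apply Rmax_l.
  assert (Hy2 : l - eps / 2 <= y) by apply Rmax_r.
  assert (Hy3 : y < l) by (apply Rmax_lub_lt; lra).
  assert (Hm : hitting_time (-1) <= hitting_time y).
  { destruct Hy1 as [Hlt | <-]; [apply Rlt_le, hitting_time_lt; assumption | right; reflexivity]. }
  exists (hitting_time y). intros t Ht.
  destruct (flow_spec t ltac:(lra)) as [Hft _].
  assert (y <= flow t) by (rewrite <- (flow_hitting_time y) by lra; apply flow_le; assumption).
  rewrite Rabs_left1; lra.
Qed.

End AutonomousFlow.

Section Model.

Variables alpha beta gamma delta u0 v0 w0 : R.
Hypotheses (Ha : 0 < alpha) (Hb : 0 < beta) (Hg : 0 < gamma) (Hd : 0 < delta)
  (Hu0 : 0 < u0) (Hv0 : 0 < v0) (Hw0 : 0 < w0).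

Definition profile x :=
  w0 + beta * u0 / delta * (1 - exp (delta * x)) + gamma * v0 / alpha * (1 - exp (alpha * x)).

Definition profile_slope x := beta * u0 * exp (delta * x) + gamma * v0 * exp (alpha * x).

Lemma profile_derive x : derivable_pt_lim profile x (- profile_slope x).
Proof.
  apply is_derive_Reals. unfold profile, profile_slope.
  auto_derive; [exact I | field; lra].
Qed.

Lemma profile_continuous x : continuity_pt profile x.
Proof. apply derivable_continuous_pt. exists (- profile_slope x). apply profile_derive. Qed.

Lemma profile_0 : profile 0 = w0.
Proof. unfold profile. rewrite !Rmult_0_r, exp_0. ring. Qed.

Lemma profile_slope_lt x y : x < y -> profile_slope x < profile_slope y.
Proof.
  intros Hxy. unfold profile_slope.
  assert (exp (delta * x) < exp (delta * y)) by (apply exp_increasing; nra).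
  assert (exp (alpha * x) < exp (alpha * y)) by (apply exp_increasing; nra).
  assert (0 < beta * u0) by nra. assert (0 < gamma * v0) by nra. nra.
Qed.

Lemma profile_lt x y : x < y -> profile y < profile x.
Proof.
  intros Hxy.
  destruct (MVT_cor2 profile (fun z => - profile_slope z) x y Hxy) as [c [Hc _]].
  - intros c _. apply profile_derive.
  - assert (0 < profile_slope c).
    { unfold profile_slope. assert (H1 := exp_pos (delta * c)). assert (H2 := exp_pos (alpha * c)).
      assert (0 < beta * u0) by nra. assert (0 < gamma * v0) by nra. nra. }
    nra.
Qed.

Lemma profile_has_root : exists l, 0 < l /\ profile l = 0.
Proof.
  set (B := beta * u0 / delta). set (C := gamma * v0 / alpha).
  assert (HB : 0 < B) by (apply Rdiv_lt_0_compat; nra).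
  assert (HC : 0 < C) by (apply Rdiv_lt_0_compat; nra).
  set (X := (w0 + B + C) / (B * delta)).
  assert (HX : 0 < X) by (apply Rdiv_lt_0_compat; nra).
  assert (HpX : profile X < 0).
  { unfold profile. fold B C.
    assert (H1 := exp_ineq1 (delta * X) ltac:(nra)).
    assert (H2 : B * (delta * X) = w0 + B + C) by (unfold X; field; lra).
    assert (H3 := exp_pos (alpha * X)). nra. }
  destruct (f_interv_is_interv (fun x => - profile x) 0 X 0 HX) as [l [Hl Hl0]].
  - rewrite profile_0. lra.
  - intros x _. apply continuity_pt_opp, profile_continuous.
  - exists l. split; [| lra].
    destruct Hl as [[Hl | <-] _]; [exact Hl | rewrite profile_0 in Hl0; lra].
Qed.

Lemma profile_le_lipschitz l x : profile l = 0 -> x < l ->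
  profile x <= profile_slope l * (l - x).
Proof.
  intros Hl Hx.
  destruct (MVT_cor2 profile (fun z => - profile_slope z) x l Hx) as [c [Hc1 Hc2]].
  - intros c _. apply profile_derive.
  - assert (profile_slope c < profile_slope l) by (apply profile_slope_lt; lra). nra.
Qed.

Lemma profile_flow_solution (s : R -> R) : s 0 = 0 ->
  (forall t, 0 <= t -> derivable_pt_lim s t (profile (s t))) ->
  is_global_solution alpha beta gamma delta u0 v0 w0
    (fun t => u0 * exp (delta * s t)) (fun t => v0 * exp (alpha * s t)) (fun t => profile (s t)).
Proof.
  intros Hs0 Hs.
  assert (Dexp : forall c k t, 0 <= t ->
            derivable_pt_lim (fun y => c * exp (k * s y)) t (k * (c * exp (k * s t)) * profile (s t))).
  { intros c k t Ht.
    replace (k * (c * exp (k * s t)) * profile (s t))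
      with (c * k * exp (k * s t) * profile (s t)) by ring.
    apply (derivable_pt_lim_comp s (fun x => c * exp (k * x))); [apply Hs, Ht|].
    apply is_derive_Reals. auto_derive; [exact I | ring]. }
  assert (Dw : forall t, 0 <= t ->
            derivable_pt_lim (fun y => profile (s y)) t
              (- beta * (u0 * exp (delta * s t)) * profile (s t)
               - gamma * (v0 * exp (alpha * s t)) * profile (s t))).
  { intros t Ht.
    replace (- beta * (u0 * exp (delta * s t)) * profile (s t)
             - gamma * (v0 * exp (alpha * s t)) * profile (s t))
      with (- profile_slope (s t) * profile (s t)) by (unfold profile_slope; ring).
    apply (derivable_pt_lim_comp s profile); [apply Hs, Ht | apply profile_derive]. }
  assert (Hcont : forall (f df : R -> R), (forall t, 0 <= t -> derivable_pt_lim f t (df t)) ->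
            forall a, f 0 = a -> right_cont_at0 f a).
  { intros f df Hf a <-. apply right_cont_at0_of_continuity, derivable_continuous_pt.
    exists (df 0). apply Hf, Rle_refl. }
  assert (Hu00 : u0 * exp (delta * s 0) = u0) by (rewrite Hs0, Rmult_0_r, exp_0; ring).
  assert (Hv00 : v0 * exp (alpha * s 0) = v0) by (rewrite Hs0, Rmult_0_r, exp_0; ring).
  assert (Hw00 : profile (s 0) = w0) by (rewrite Hs0; apply profile_0).
  repeat split; try assumption.
  - exact (Hcont _ _ (Dexp u0 delta) _ Hu00).
  - exact (Hcont _ _ (Dexp v0 alpha) _ Hv00).
  - exact (Hcont _ _ Dw _ Hw00).
  - apply Dexp; lra.
  - apply Dexp; lra.
  - apply Dw; lra.
Qed.

End Model.

Lemma sgn_eq x y : (0 < x <-> 0 < y) -> (x < 0 <-> y < 0) -> sgn x = sgn y.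
Proof.
  intros Hpos Hneg. unfold sgn.
  destruct (Rcase_abs x) as [Hx | Hx], (Rcase_abs y) as [Hy | Hy];
    [reflexivity | apply Hneg in Hx; lra | apply Hneg in Hy; lra |].
  destruct (Req_EM_T x 0) as [Hx0 | Hx0], (Req_EM_T y 0) as [Hy0 | Hy0];
    [reflexivity | | | reflexivity].
  - assert (0 < y) by lra. apply Hpos in H. lra.
  - assert (0 < x) by lra. apply Hpos in H. lra.
Qed.

Lemma sgn_mul_exp_sub c x a b : 0 < c -> 0 < x ->
  sgn (c * exp (a * x) - c * exp (b * x)) = sgn (a - b).
Proof.
  intros Hc Hx. apply sgn_eq.
  - split; intros H.
    + enough (b * x < a * x) by nra. apply exp_lt_inv. nra.
    + assert (exp (b * x) < exp (a * x)) by (apply exp_increasing; nra). nra.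
  - split; intros H.
    + enough (a * x < b * x) by nra. apply exp_lt_inv. nra.
    + assert (exp (a * x) < exp (b * x)) by (apply exp_increasing; nra). nra.
Qed.

Theorem mainTheorem19 (alpha beta gamma delta u0 v0 w0 : R)
  (Ha : 0 < alpha) (Hb : 0 < beta) (Hg : 0 < gamma) (Hd : 0 < delta)
  (Hu0 : 0 < u0) (Hv0 : 0 < v0) (Hw0 : 0 < w0) :
  exists u v w : R -> R,
    is_global_solution alpha beta gamma delta u0 v0 w0 u v w /\
    (forall t, 0 <= t -> 0 < u t /\ 0 < v t /\ 0 < w t) /\
    (forall u' v' w' : R -> R,
       is_global_solution alpha beta gamma delta u0 v0 w0 u' v' w' ->
       forall t, 0 <= t -> u' t = u t /\ v' t = v t /\ w' t = w t) /\
    exists uinf vinf : R,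
      0 <= uinf /\ 0 <= vinf /\
      tends_at_infty u uinf /\ tends_at_infty v vinf /\ tends_at_infty w 0 /\
      (u0 = v0 -> sgn (uinf - vinf) = sgn (delta - alpha)).
Proof.
  destruct (profile_has_root alpha beta gamma delta u0 v0 w0) as [l [Hl Hroot]]; try assumption.
  set (F := profile alpha beta gamma delta u0 v0 w0).
  set (L := profile_slope alpha beta gamma delta u0 v0 l).
  assert (HFpos : forall x, x < l -> 0 < F x)
    by (intros x Hx; rewrite <- Hroot; apply profile_lt; assumption).
  assert (HFlip : forall x, x < l -> F x <= L * (l - x))
    by (intros x Hx; apply profile_le_lipschitz; assumption).
  assert (HFcont : forall x, x < l -> continuity_pt F x)
    by (intros x _; apply profile_continuous; assumption).
  set (s := flow F l).
  assert (Hsol := profile_flow_solution alpha beta gamma delta u0 v0 w0 Ha Hd s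
                    (flow_0 F l L HFcont HFpos HFlip Hl)
                    (flow_derive F l L HFcont HFpos HFlip Hl)).
  assert (Hs := flow_tends F l L HFcont HFpos HFlip Hl).
  exists (fun t => u0 * exp (delta * s t)), (fun t => v0 * exp (alpha * s t)), (fun t => F (s t)).
  split; [exact Hsol|]. split.
  { intros t Ht. assert (H1 := exp_pos (delta * s t)). assert (H2 := exp_pos (alpha * s t)).
    split; [nra | split; [nra | apply HFpos, (flow_range F l L HFcont HFpos HFlip Hl), Ht]]. }
  split.
  { intros p q r Sol t Ht. exact (is_global_solution_unique _ _ _ _ _ _ _ _ _ _ _ _ _ Hsol Sol t Ht). }
  exists (u0 * exp (delta * l)), (v0 * exp (alpha * l)).
  assert (H1 := exp_pos (delta * l)). assert (H2 := exp_pos (alpha * l)).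
  split; [nra|]. split; [nra|].
  split; [exact (tends_at_infty_comp s (fun x => u0 * exp (delta * x)) l Hs ltac:(reg))|].
  split; [exact (tends_at_infty_comp s (fun x => v0 * exp (alpha * x)) l Hs ltac:(reg))|].
  split; [rewrite <- Hroot; apply tends_at_infty_comp, profile_continuous; assumption|].
  intros <-. apply sgn_mul_exp_sub; assumption.
Qed.
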